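(* Let $\lambda\in\Lambda(n,r)$ and let $\underline m,\underline p$ be decompositions of $n$ with $\underline m\le\underline p$. Then $S_0(n,r)\,o_{\lambda,\underline m}\subseteq S_0(n,r)\,o_{\lambda,\underline p}$, and this inclusion of left $S_0(n,r)$-modules splits (so $S_0(n,r)o_{\lambda,\underline m}$ is a direct summand of $S_0(n,r)o_{\lambda,\underline p}$).
   Context: Setup: Fix positive integers $n,r$ and a field $k$. $\Lambda(n,r)$: compositions of $r$ into $n$ nonnegative parts. $\Theta(n,r)$: $n\times n$ nonnegative integer matrices with entry sum $r$, with row/column-sum vectors $\mathrm{ro}(A),\mathrm{co}(A)$. For an $r$-dimensional $V$ (finite or algebraically closed field), $\mathcal F_\lambda$ denotes flags $0=V_0\subseteq\cdots\subseteq V_n=V$ with $\dim V_i/V_{i-1}=\lambda_i$; $GL(V)$-orbits $e_A$ on pairs of flags correspond to $A\in\Theta(n,r)$ via $a_{ij}=\dim(V_i\cap V'_j)-\dim(V_i\cap V'_{j-1}+V_{i-1}\cap V'_j)$. The $0$-Schur algebra $S_0(n,r)$ (specialization at $q=0$ of the $q$-Schur algebra, tensored with $k$) has basis $\{e_A\}$ with $e_Ae_B=0$ if $\mathrm{co}(A)\ne\mathrm{ro}(B)$, otherwise $e_Ae_B$ is the unique open orbit among pairs $(f,h)$ with $(f,g)\in e_A,(g,h)\in e_B$ for some $g$. $k_\lambda=e_{\mathrm{diag}(\lambda)}$, $o_\lambda$ the open orbit in $\mathcal F_\lambda\times\mathcal F_\lambda$. For a decomposition $\underline p=(p_1,\dots,p_s)$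 of $n$ (positive integers summing to $n$), $\lambda^i=(\lambda_{p_1+\cdots+p_{i-1}+1},\dots,\lambda_{p_1+\cdots+p_i})$ and $o_{\lambda,\underline p}=e_A$ with $A$ block diagonal (blocks of sizes $p_i$), $i$-th block the matrix of the open orbit $o_{\lambda^i}$, other entries $0$; these are idempotents. $\underline m\le\underline p$ means $\underline p$ refines $\underline m$ (each $m_i$ is a sum of consecutive entries of $\underline p$). *)

From HB Require Import structures.
From mathcomp Require Import all_boot all_order all_algebra.
Set Implicit Arguments. Unset Strict Implicit. Unset Printing Implicit Defensive.
Import Order.TTheory GRing.Theory.

(* (entries are automatically <= r, so we store them in 'I_r.+1)           *)
Definition mxT (n r : nat) := {ffun 'I_n * 'I_n -> 'I_r.+1}.
Definition Theta (n r : nat) :=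
  {A : mxT n r | \sum_(ij : 'I_n * 'I_n) (A ij : nat) == r}.

Definition entry n r (A : Theta n r) (i j : 'I_n) : nat := val A (i, j).
Definition ro n r (A : Theta n r) (i : 'I_n) : nat := \sum_(j < n) entry A i j.
Definition co n r (A : Theta n r) (j : 'I_n) : nat := \sum_(i < n) entry A i j.

(* cumN A i j = sum_{s <= i, t <= j} a_{st} (1-based), i.e. dim (V_i cap V'_j)
   for a pair of flags in the orbit e_A; i, j range over 0..n. *)
Definition cumN n r (A : Theta n r) (i j : nat) : nat :=
  \sum_(s < n | s < i) \sum_(t < n | t < j) entry A s t.

Definition cumc n (mu : 'I_n -> nat) (k : nat) : nat := \sum_(t < n | t < k) mu t.

(* The generic (open-orbit) composition e_A e_B, for co A = ro B = mu:
   dim (f_i cap h_j) = max_k (dim (f_i cap g_k) + dim (g_k cap h_j) - dim g_k). *)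
Definition prodN n r (A B : Theta n r) (i j : nat) : nat :=
  \max_(kk < n.+1) (cumN A i kk + cumN B kk j - cumc (co A) kk).

(* genprod A B C <=> co A = ro B and e_A e_B = e_C *)
Definition genprod n r (A B C : Theta n r) : bool :=
  [forall i : 'I_n, co A i == ro B i] &&
  [forall i : 'I_n.+1, forall j : 'I_n.+1, cumN C i j == prodN A B i j].

(* S_0(n,r) (tensored with k): k-linear combinations of the basis e_A.     *)
Notation S0 k n r := {ffun Theta n r -> k}.

Definition ebas (k : fieldType) n r (A : Theta n r) : S0 k n r :=
  [ffun C => ((C == A)%:R)%R].

(* bilinear extension of e_A e_B = e_{A*B} (or 0 if co A <> ro B) *)
Definition smul (k : fieldType) n r (x y : S0 k n r) : S0 k n r :=
  [ffun C => (\sum_(A : Theta n r) \sum_(B : Theta n r)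
               x A * y B * (genprod A B C)%:R)%R].

Definition in_lideal (k : fieldType) n r (o x : S0 k n r) : Prop :=
  exists s : S0 k n r, x = smul s o.

(* Decompositions of n and the order m <= p (p refines m).                 *)
Definition is_decomp (n : nat) (p : seq nat) : bool :=
  all (fun x => 0 < x) p && (sumn p == n).

Definition refines (m p : seq nat) : Prop :=
  exists ss : seq (seq nat), flatten ss = p /\ map sumn ss = m.

Definition psums (p : seq nat) : seq nat :=
  [seq sumn (take i p) | i <- iota 0 (size p).+1].
Definition blk_start (p : seq nat) (i : nat) : nat :=
  \max_(b <- psums p | b <= i) b.
Definition blk_end (n : nat) (p : seq nat) (i : nat) : nat :=
  \big[minn/n]_(b <- psums p | i < b) b.

(* entries of the matrix of o_{lambda,p}: block diagonal, the block on
   indices [s,e) being the matrix of the open orbit o_{lambda^b}, i.e. the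
   generic pair of flags: local dim (f_a cap h_b) = max(0, |a| + |b| - |lambda^b|). *)
Definition olp_entry n (lam : 'I_n -> nat) (p : seq nat) (i j : 'I_n) : nat :=
  if blk_start p i == blk_start p j then
    let s := blk_start p i in
    let e := blk_end n p i in
    let L := cumc lam in
    let M := fun a b => ((L a - L s) + (L b - L s)) - (L e - L s) in
    (M i.+1 j.+1 + M i j) - (M i j.+1 + M i.+1 j)
  else 0.

Definition olp (k : fieldType) n r (lam : 'I_n -> nat) (p : seq nat) : S0 k n r :=
  [ffun C => ([forall i : 'I_n, forall j : 'I_n, entry C i j == olp_entry lam p i j]%:R)%R].

Definition sscale (k : fieldType) n r (c : k) (x : S0 k n r) : S0 k n r :=
  [ffun C => (c * x C)%R].

From HB Require Import structures.
From mathcomp Require Import all_boot all_order all_algebra.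
From mathcomp Require Import zify.
Set Implicit Arguments. Unset Strict Implicit. Unset Printing Implicit Defensive.

(* A pair of flags is determined up to GL(V) by the dimension function
   [cumN A i j = dim (V_i cap V'_j)], and the open orbit of a composition is
   described by the truncated maximum [prodN]; so associativity of S_0(n,r)
   comes down to exchanging two maxima over the middle flag.  The dimension
   function of o_{lam,p} is [max_b (min (L a, L b) + min (L c, L b) - L b)],
   b ranging over the block boundaries of p and L the partial sums of lam.
   The boundaries of m are boundaries of p, and a boundary realising the
   maximum for m is an optimal middle flag; hence o_m o_p = o_m and
   o_m o_m = o_m.  Then S_0 o_m = S_0 o_m o_p lies in S_0 o_p, and right
   multiplication by o_m is an S_0-linear projection of S_0 o_p onto S_0 o_m. *)

Lemma big_selective_seq (R : Type) (I : eqType) (op : R -> R -> R) (x0 : R)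
    (s : seq I) (P : pred I) (F : I -> R) :
  (forall x y, op x y = x \/ op x y = y) ->
  \big[op/x0]_(b <- s | P b) F b = x0 \/
  exists2 b, (b \in s) && P b & \big[op/x0]_(c <- s | P c) F c = F b.
Proof.
move=> op_sel; elim: s => [|a s IH]; first by left; rewrite big_nil.
rewrite big_cons; case: ifP => Pa; last first.
  case: IH => [->|[b /andP [bs Pb] ->]]; first by left.
  by right; exists b; rewrite ?inE ?bs ?Pb ?orbT.
have [-> | ->] := op_sel (F a) (\big[op/x0]_(c <- s | P c) F c).
  by right; exists a; rewrite ?inE ?eqxx.
case: IH => [->|[b /andP [bs Pb] ->]]; first by left.
by right; exists b; rewrite ?inE ?bs ?Pb ?orbT.
Qed.

Lemma maxn_sel (x y : nat) : maxn x y = x \/ maxn x y = y.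
Proof. lia. Qed.

Lemma minn_sel (x y : nat) : minn x y = x \/ minn x y = y.
Proof. lia. Qed.

Lemma bigmax_seq_attained (I : eqType) (s : seq I) (P : pred I) (F : I -> nat) b0 :
  b0 \in s -> P b0 ->
  exists2 b, (b \in s) && P b & \max_(c <- s | P c) F c = F b.
Proof.
move=> sb0 Pb0; case: (big_selective_seq 0 s P F maxn_sel) => [max0|//].
exists b0; first by rewrite sb0.
by move: (leq_bigmax_seq (P := P) (F := F) b0 sb0 Pb0); rewrite max0 leqn0 => /eqP ->.
Qed.

Lemma bigmin_seq_leq_idx (s : seq nat) (P : pred nat) x0 :
  \big[minn/x0]_(c <- s | P c) c <= x0.
Proof.
elim: s => [|a s IH]; first by rewrite big_nil.
by rewrite big_cons; case: ifP => // _; rewrite geq_min IH orbT.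
Qed.

Lemma bigmin_seq_leq (s : seq nat) (P : pred nat) x0 b :
  b \in s -> P b -> \big[minn/x0]_(c <- s | P c) c <= b.
Proof.
elim: s => [//|a s IH]; rewrite inE big_cons => /predU1P [-> ->|bs Pb].
  exact: geq_minl.
by case: ifP => _; rewrite ?geq_min IH ?orbT.
Qed.

(* [P = \max_(k <- I) (x k - M k)], with the maximum reached at some k where
   [M k <= x k]; stated without truncated subtraction. *)
Definition max_gap (I : seq nat) (x M : nat -> nat) (P : nat) : Prop :=
  (forall k, k \in I -> x k <= P + M k) /\ exists2 k, k \in I & x k = P + M k.

Lemma max_gap_uniq I x M P P' : max_gap I x M P -> max_gap I x M P' -> P = P'.
Proof.
move=> [H1 [k1 I1 E1]] [H2 [k2 I2 E2]].
have := H2 _ I1; have := H1 _ I2; lia.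
Qed.

Lemma max_gap_bigmax I x M : (exists2 k0, k0 \in I & x k0 = M k0) ->
  max_gap I x M (\max_(k <- I) (x k - M k)).
Proof.
move=> [k0 Ik0 E0]; split.
  by move=> k Ik; have := leq_bigmax_seq (P := xpredT) (F := fun k => x k - M k) k Ik isT; lia.
have [k /andP [Ik _] Ek] := bigmax_seq_attained (fun k => x k - M k) Ik0 (isT : xpredT k0).
rewrite Ek; case: (posnP (x k - M k)) => [k0E|pos]; first by exists k0 => //; lia.
by exists k => //; lia.
Qed.

Lemma max_gap_ext I x y M M' P : {in I, x =1 y} -> M =1 M' ->
  max_gap I x M P -> max_gap I y M' P.
Proof.
move=> exy eM [H1 [k Ik Ek]]; split.
  by move=> k' Ik'; rewrite -exy // -eM; apply: H1.
by exists k => //; rewrite -exy // -eM.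
Qed.

Definition max_gap2 (I : seq nat) (x : nat -> nat -> nat) (M N : nat -> nat) (T : nat) :=
  (forall k l, k \in I -> l \in I -> x k l <= T + M k + N l) /\
  exists k l, [/\ k \in I, l \in I & x k l = T + M k + N l].

Lemma max_gap2_uniq I x M N T T' : max_gap2 I x M N T -> max_gap2 I x M N T' -> T = T'.
Proof.
move=> [H1 [k1 [l1 [I1 J1 E1]]]] [H2 [k2 [l2 [I2 J2 E2]]]].
have := H2 _ _ I1 J1; have := H1 _ _ I2 J2; lia.
Qed.

Lemma max_gap2_l I (a c : nat -> nat) (b : nat -> nat -> nat) d M N T :
  (forall l, l \in I -> max_gap I (fun k => a k + b k l) M (d l)) ->
  max_gap I (fun l => d l + c l) N T ->
  max_gap2 I (fun k l => a k + b k l + c l) M N T.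
Proof.
move=> Hd [HT [l0 Il0 El0]]; split.
  move=> k l Ik Il; have [h1 _] := Hd l Il; have := h1 k Ik; have := HT l Il; lia.
have [_ [k0 Ik0 Ek0]] := Hd l0 Il0.
by exists k0, l0; split => //; lia.
Qed.

Lemma max_gap2_r I (a c : nat -> nat) (b : nat -> nat -> nat) f M N T :
  (forall k, k \in I -> max_gap I (fun l => b k l + c l) N (f k)) ->
  max_gap I (fun k => a k + f k) M T ->
  max_gap2 I (fun k l => a k + b k l + c l) M N T.
Proof.
move=> Hf [HT [k0 Ik0 Ek0]]; split.
  move=> k l Ik Il; have [h1 _] := Hf k Ik; have := h1 l Il; have := HT k Ik; lia.
have [_ [l0 Il0 El0]] := Hf k0 Ik0.
by exists k0, l0; split => //; lia.
Qed.

Section CumulativeSums.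
Variables n r : nat.

Lemma sum_ord_ltS (F : 'I_n -> nat) i (lt_in : i < n) :
  \sum_(s < n | s < i.+1) F s = \sum_(s < n | s < i) F s + F (Ordinal lt_in).
Proof.
rewrite (bigD1 (Ordinal lt_in)) //= addnC; congr (_ + _).
by apply: eq_bigl => s; rewrite ltnS -val_eqE /= ltn_neqAle andbC.
Qed.

Lemma sum_ord_ltE (F : 'I_n -> nat) i : n <= i ->
  \sum_(s < n | s < i) F s = \sum_(s < n) F s.
Proof. by move=> le_ni; apply: eq_bigl => s; apply: leq_trans le_ni. Qed.

Lemma sum_ord_lt_mkcond (F : 'I_n -> nat) i :
  \sum_(s < n | s < i) F s = \sum_(s < n) ((s < i) * F s).
Proof. by rewrite big_mkcond; apply: eq_bigr => s _; case: (s < i); rewrite ?mul1n. Qed.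

Lemma cumc0 (f : 'I_n -> nat) : cumc f 0 = 0.
Proof. exact: big_pred0. Qed.

Lemma cumcS (f : 'I_n -> nat) t (lt_tn : t < n) : cumc f t.+1 = cumc f t + f (Ordinal lt_tn).
Proof. exact: sum_ord_ltS. Qed.

Lemma leq_cumc (f : 'I_n -> nat) a b : a <= b -> cumc f a <= cumc f b.
Proof.
move=> le_ab; rewrite /cumc !sum_ord_lt_mkcond; apply: leq_sum => s _.
by apply: leq_mul => //; case: (ltnP s a) => // /leq_trans /(_ le_ab) ->.
Qed.

Lemma eq_cumc (f g : 'I_n -> nat) : f =1 g -> cumc f =1 cumc g.
Proof. by move=> efg a; apply: eq_bigr => s _. Qed.

Lemma cumc_inj (f g : 'I_n -> nat) :
  (forall a, a <= n -> cumc f a = cumc g a) -> f =1 g.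
Proof.
move=> efg [t lt_tn]; have := efg t.+1 lt_tn; have := efg t (ltnW lt_tn).
by rewrite !(cumcS _ lt_tn); lia.
Qed.

Lemma cumNE (A : Theta n r) i k :
  cumN A i k = \sum_(s < n) \sum_(t < n) ((s < i) * (t < k) * entry A s t).
Proof.
rewrite /cumN sum_ord_lt_mkcond; apply: eq_bigr => s _.
by rewrite sum_ord_lt_mkcond big_distrr /=; apply: eq_bigr => t _; rewrite mulnA.
Qed.

Lemma leq_cumN (A : Theta n r) i i' k k' : i <= i' -> k <= k' ->
  cumN A i k <= cumN A i' k'.
Proof.
move=> le_ii le_kk; rewrite !cumNE; apply: leq_sum => s _; apply: leq_sum => t _.
case: (ltnP s i) => si; last by rewrite !mul0n.
case: (ltnP t k) => tk; last by rewrite muln0 mul0n.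
by rewrite (leq_trans si le_ii) (leq_trans tk le_kk).
Qed.

Lemma cumN_supermod (A : Theta n r) i i' k k' : i <= i' -> k <= k' ->
  cumN A i' k + cumN A i k' <= cumN A i' k' + cumN A i k.
Proof.
move=> le_ii le_kk; rewrite !cumNE -!big_split /=; apply: leq_sum => s _.
rewrite -!big_split /=; apply: leq_sum => t _; rewrite -!mulnDl; apply: leq_mul => //.
have : (s < i) ==> (s < i') by apply/implyP => /leq_trans; apply.
have : (t < k) ==> (t < k') by apply/implyP => /leq_trans; apply.
by case: (s < i) (s < i') (t < k) (t < k') => [] [] [] [].
Qed.

Lemma cumN0l (A : Theta n r) k : cumN A 0 k = 0.
Proof. exact: big_pred0. Qed.

Lemma cumN0r (A : Theta n r) i : cumN A i 0 = 0.
Proof. by rewrite /cumN big1 // => s _; apply: big_pred0. Qed.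

Lemma cumNnl (A : Theta n r) k : cumN A n k = cumc (co A) k.
Proof.
rewrite /cumN /cumc sum_ord_ltE // exchange_big /=.
by apply: eq_bigr => t _; apply: eq_bigr.
Qed.

Lemma cumNnr (A : Theta n r) i : cumN A i n = cumc (ro A) i.
Proof. by apply: eq_bigr => s _; rewrite sum_ord_ltE. Qed.

Lemma cumNnn (A : Theta n r) : cumN A n n = r.
Proof.
rewrite /cumN sum_ord_ltE //; under eq_bigr do rewrite sum_ord_ltE //.
transitivity (\sum_(ij : 'I_n * 'I_n) (val A ij : nat)); last exact: eqP (valP A).
by rewrite pair_big; apply: eq_bigr => -[s t].
Qed.

Lemma cumN_entry (A : Theta n r) (i j : 'I_n) :
  cumN A i.+1 j.+1 + cumN A i j = cumN A i.+1 j + cumN A i j.+1 + entry A i j.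
Proof.
have row_step k : cumN A i.+1 k = cumN A i k + \sum_(t < n | t < k) entry A i t.
  by rewrite /cumN (sum_ord_ltS _ (ltn_ord i)) (_ : Ordinal _ = i) //; apply: val_inj.
rewrite !row_step (sum_ord_ltS _ (ltn_ord j)) (_ : Ordinal _ = j); last exact: val_inj.
lia.
Qed.

Lemma entry_inj (A B : Theta n r) : (forall i j, entry A i j = entry B i j) -> A = B.
Proof. by move=> eAB; apply/val_inj/ffunP => -[i j]; apply/val_inj/eAB. Qed.

Lemma cumN_inj (A B : Theta n r) :
  (forall i j, i <= n -> j <= n -> cumN A i j = cumN B i j) -> A = B.
Proof.
move=> eAB; apply: entry_inj => i j.
have := cumN_entry A i j; have := cumN_entry B i j.
by rewrite !eAB ?(ltnW (ltn_ord i)) ?(ltnW (ltn_ord j)) ?(ltn_ord i) ?(ltn_ord j); lia.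
Qed.

End CumulativeSums.

Definition mdiff (P : nat -> nat -> nat) i j := (P i.+1 j.+1 + P i j) - (P i.+1 j + P i j.+1).

Section ThetaOfCumulative.
Variables n r : nat.
Variable P : nat -> nat -> nat.
Hypothesis P0l : forall j, j <= n -> P 0 j = 0.
Hypothesis P0r : forall i, i <= n -> P i 0 = 0.
Hypothesis P_supermod :
  forall i j, i < n -> j < n -> P i.+1 j + P i j.+1 <= P i.+1 j.+1 + P i j.
Hypothesis Pnn : P n n = r.

Lemma sum_mdiff_row (i : 'I_n) j : j <= n ->
  \sum_(t < n | t < j) mdiff P i t + P i j = P i.+1 j.
Proof.
elim: j => [|j IH] le_jn; first by rewrite big_pred0 // !P0r // ltnW.
rewrite (sum_ord_ltS _ le_jn) /=.
by have := IH (ltnW le_jn); have := P_supermod (ltn_ord i) le_jn; rewrite /mdiff /=; lia.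
Qed.

Lemma sum_mdiff i j : i <= n -> j <= n ->
  \sum_(s < n | s < i) \sum_(t < n | t < j) mdiff P s t = P i j.
Proof.
elim: i => [|i IH] le_in le_jn; first by rewrite big_pred0 // P0l.
by rewrite (sum_ord_ltS _ le_in) IH ?(ltnW le_in) // addnC (sum_mdiff_row (Ordinal le_in)).
Qed.

Lemma sum_mdiff_nn : \sum_(s < n) \sum_(t < n) mdiff P s t = r.
Proof.
rewrite -Pnn -sum_mdiff // sum_ord_ltE //.
by apply: eq_bigr => s _; rewrite sum_ord_ltE.
Qed.

Lemma leq_mdiff (i j : 'I_n) : mdiff P i j <= r.
Proof.
rewrite -sum_mdiff_nn (bigD1 i) //= (bigD1 j) //= -addnA; exact: leq_addr.
Qed.

Lemma exists_Theta_cumN : exists C : Theta n r,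
  (forall i j : 'I_n, entry C i j = mdiff P i j) /\
  (forall i j, i <= n -> j <= n -> cumN C i j = P i j).
Proof.
pose f : mxT n r := [ffun ij : 'I_n * 'I_n => inord (mdiff P ij.1 ij.2)].
have ef (i j : 'I_n) : (f (i, j) : nat) = mdiff P i j.
  by rewrite ffunE inordK // ltnS leq_mdiff.
have sum_f : \sum_(ij : 'I_n * 'I_n) (f ij : nat) == r.
  by apply/eqP; rewrite -[RHS]sum_mdiff_nn pair_big; apply: eq_bigr => -[s t] _; apply: ef.
exists (exist _ f sum_f); split => // i j le_in le_jn.
rewrite -sum_mdiff //; apply: eq_bigr => s _; apply: eq_bigr => t _; exact: ef.
Qed.

End ThetaOfCumulative.

Section GenericProduct.
Variables n r : nat.
Local Notation I := (iota 0 n.+1).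
Local Notation T := (Theta n r).

Lemma mem_iota_le k : (k \in I) = (k <= n).
Proof. by rewrite mem_iota. Qed.

Lemma prodN_max_gap (A B : T) i j :
  max_gap I (fun k => cumN A i k + cumN B k j) (cumc (co A)) (prodN A B i j).
Proof.
rewrite /prodN -(big_mkord xpredT (fun k => cumN A i k + cumN B k j - cumc (co A) k)).
rewrite /index_iota subn0; apply: max_gap_bigmax; exists 0; first by rewrite mem_iota_le.
by rewrite cumN0r cumN0l cumc0.
Qed.

Lemma genprod_cumN (A B C : T) i j : genprod A B C -> i <= n -> j <= n ->
  cumN C i j = prodN A B i j.
Proof.
case/andP => _ /forallP eC le_in le_jn.
by have /forallP /(_ (Ordinal (le_jn : j < n.+1))) /eqP := eC (Ordinal (le_in : i < n.+1)).
Qed.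

Lemma genprod_co_ro (A B C : T) : genprod A B C -> co A =1 ro B.
Proof. by case/andP => /forallP eAB _ t; apply/eqP. Qed.

Lemma genprod_intro (A B C : T) : co A =1 ro B ->
  (forall i j, i <= n -> j <= n -> cumN C i j = prodN A B i j) -> genprod A B C.
Proof.
move=> eAB eC; apply/andP; split; first by apply/forallP => t; rewrite eAB.
by apply/forallP => i; apply/forallP => j; apply/eqP/eC; rewrite -ltnS.
Qed.

Lemma prodNnl (A B : T) k : co A =1 ro B -> prodN A B n k = cumN B n k.
Proof.
move=> eAB; apply: (max_gap_uniq (prodN_max_gap A B n k)); split.
  move=> l; rewrite mem_iota_le cumNnl => le_ln.
  by have := leq_cumN B le_ln (leqnn k); lia.
by exists n; rewrite ?mem_iota_le // cumNnl; lia.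
Qed.

Lemma prodNnr (A B : T) i : co A =1 ro B -> prodN A B i n = cumN A i n.
Proof.
move=> eAB; apply: (max_gap_uniq (prodN_max_gap A B i n)); split.
  move=> l; rewrite mem_iota_le (cumNnr B) -(eq_cumc eAB) => le_ln.
  by have := leq_cumN A (leqnn i) le_ln; lia.
by exists n; rewrite ?mem_iota_le // cumNnn -cumNnl cumNnn.
Qed.

Lemma genprod_co (A B C : T) : genprod A B C -> co C =1 co B.
Proof.
move=> gABC; apply: cumc_inj => a le_an.
by rewrite -!cumNnl (genprod_cumN gABC) // prodNnl //; apply: genprod_co_ro gABC.
Qed.

Lemma genprod_ro (A B C : T) : genprod A B C -> ro C =1 ro A.
Proof.
move=> gABC; apply: cumc_inj => a le_an.
by rewrite -!cumNnr (genprod_cumN gABC) // prodNnr //; apply: genprod_co_ro gABC.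
Qed.

Lemma genprod_uniq (A B C C' : T) : genprod A B C -> genprod A B C' -> C = C'.
Proof.
move=> gC gC'; apply: cumN_inj => i j le_in le_jn.
by rewrite (genprod_cumN gC) // (genprod_cumN gC').
Qed.

Lemma prodN_supermod (A B : T) i j : i < n -> j < n ->
  prodN A B i.+1 j + prodN A B i j.+1 <= prodN A B i.+1 j.+1 + prodN A B i j.
Proof.
move=> lt_in lt_jn.
have [_ [k1 I1 E1]] := prodN_max_gap A B i.+1 j.
have [_ [k2 I2 E2]] := prodN_max_gap A B i j.+1.
have [H3 _] := prodN_max_gap A B i.+1 j.+1.
have [H4 _] := prodN_max_gap A B i j.
(* Both optimal middle indices are admissible for the other two products;
   supermodularity of A or of B, according to their order, closes the gap. *)
case: (leqP k1 k2) => le_k12.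
  by have := H3 _ I2; have := H4 _ I1; have := cumN_supermod A (leqnSn i) le_k12; lia.
by have := H3 _ I1; have := H4 _ I2; have := cumN_supermod B (ltnW le_k12) (leqnSn j); lia.
Qed.

Lemma genprod_exists (A B : T) : co A =1 ro B -> exists C, genprod A B C.
Proof.
move=> eAB.
have [||||C [_ eC]] := exists_Theta_cumN (n := n) (r := r) (P := prodN A B).
- move=> j le_jn; apply: (max_gap_uniq (prodN_max_gap A B 0 j)); split.
    move=> k; rewrite mem_iota_le cumN0l add0n (eq_cumc eAB) -cumNnr => le_kn.
    exact: leq_cumN.
  by exists 0; rewrite ?mem_iota_le // ?cumN0l ?cumN0r cumc0.
- move=> i le_in; apply: (max_gap_uniq (prodN_max_gap A B i 0)); split.
    move=> k; rewrite mem_iota_le cumN0r addn0 add0n -cumNnl => le_kn.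
    exact: leq_cumN.
  by exists 0; rewrite ?mem_iota_le // ?cumN0l ?cumN0r cumc0.
- exact: prodN_supermod.
- by rewrite prodNnl // cumNnn.
by exists C; apply: genprod_intro.
Qed.

(* Both sides are the double maximum over k, l of
   [cumN A i k + cumN B k l + cumN E l j - cumc (co A) k - cumc (co B) l]. *)
Lemma prodN_assoc (A B D E F : T) i j : genprod A B D -> genprod B E F ->
  i <= n -> j <= n -> prodN D E i j = prodN A F i j.
Proof.
move=> gABD gBEF le_in le_jn.
apply: (@max_gap2_uniq I (fun k l => cumN A i k + cumN B k l + cumN E l j)
          (cumc (co A)) (cumc (co B))).
  apply: (@max_gap2_l _ _ _ _ (cumN D i)).
    by move=> l; rewrite mem_iota_le => le_ln; rewrite (genprod_cumN gABD) //; apply: prodN_max_gap.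
  exact: max_gap_ext (in1W (frefl _)) (eq_cumc (genprod_co gABD)) (prodN_max_gap D E i j).
apply: (@max_gap2_r _ _ _ _ (cumN F ^~ j)); last exact: prodN_max_gap.
by move=> k; rewrite mem_iota_le => le_kn; rewrite (genprod_cumN gBEF) //; apply: prodN_max_gap.
Qed.

Lemma genprod_assocl (A B D E F C : T) :
  genprod A B D -> genprod D E C -> genprod B E F -> genprod A F C.
Proof.
move=> gABD gDEC gBEF; apply: genprod_intro.
  by move=> t; rewrite (genprod_ro gBEF) (genprod_co_ro gABD).
by move=> i j le_in le_jn; rewrite (genprod_cumN gDEC) // (prodN_assoc gABD gBEF).
Qed.

Lemma genprod_assocr (A B D E F C : T) :
  genprod B E F -> genprod A F C -> genprod A B D -> genprod D E C.
Proof.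
move=> gBEF gAFC gABD; apply: genprod_intro.
  by move=> t; rewrite (genprod_co gABD) (genprod_co_ro gBEF).
by move=> i j le_in le_jn; rewrite (genprod_cumN gAFC) // (prodN_assoc gABD gBEF).
Qed.

Lemma genprod_assoc_ex (A B E C : T) :
  [exists D, genprod A B D && genprod D E C] = [exists F, genprod B E F && genprod A F C].
Proof.
apply/existsP/existsP => [[D /andP [gABD gDEC]]|[F /andP [gBEF gAFC]]].
  have [F gBEF] : exists F, genprod B E F.
    by apply: genprod_exists => t; rewrite -(genprod_co gABD) (genprod_co_ro gDEC).
  by exists F; rewrite gBEF (genprod_assocl gABD gDEC gBEF).
have [D gABD] : exists D, genprod A B D.
  by apply: genprod_exists => t; rewrite (genprod_co_ro gAFC) (genprod_ro gBEF).
by exists D; rewrite gABD (genprod_assocr gBEF gAFC gABD).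
Qed.

End GenericProduct.

Section ZeroSchurAlgebra.
Import GRing.Theory.
Local Open Scope ring_scope.
Variables (k : fieldType) (n r : nat).
Local Notation T := (Theta n r).

Lemma sum_nat_uniq_pred (P : pred T) : (forall D D', P D -> P D' -> D = D') ->
  \sum_(D : T) ((P D)%:R : k) = ([exists D, P D])%:R.
Proof.
move=> P_uniq; case: existsP => [[D0 PD0]|nP].
  rewrite (bigD1 D0) //= big1 ?addr0 ?PD0 // => D neD.
  by case: (boolP (P D)) => // PD; move: neD; rewrite (P_uniq _ _ PD0 PD) eqxx.
by rewrite big1 // => D _; case: (boolP (P D)) => // PD; case: nP; exists D.
Qed.

Lemma sum_genprod_assoc (A B E C : T) :
  \sum_(D : T) (((genprod A B D)%:R : k) * (genprod D E C)%:R) =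
  \sum_(F : T) (((genprod B E F)%:R : k) * (genprod A F C)%:R).
Proof.
under eq_bigr do rewrite -natrM mulnb.
under [RHS]eq_bigr do rewrite -natrM mulnb.
rewrite !sum_nat_uniq_pred ?genprod_assoc_ex // => X Y /andP [gX _] /andP [gY _].
  exact: genprod_uniq gX gY.
exact: genprod_uniq gX gY.
Qed.

Lemma smul_assoc (x y z : S0 k n r) : smul (smul x y) z = smul x (smul y z).
Proof.
apply/ffunP => C; rewrite !ffunE.
transitivity (\sum_(A : T) \sum_(B : T) \sum_(E : T) (x A * y B * z E *
   \sum_(D : T) (((genprod A B D)%:R : k) * (genprod D E C)%:R))).
  under eq_bigr => D _ do under eq_bigr => E _ do rewrite ffunE !mulr_suml.
  under eq_bigr => D _ do under eq_bigr => E _ do under eq_bigr => A _ do rewrite !mulr_suml.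
  under eq_bigr do rewrite exchange_big.
  under eq_bigr do under eq_bigr do rewrite exchange_big.
  rewrite exchange_big; apply: eq_bigr => A _.
  rewrite exchange_big; apply: eq_bigr => B _.
  rewrite exchange_big; apply: eq_bigr => E _.
  rewrite mulr_sumr; apply: eq_bigr => D _.
  by rewrite !mulrA; congr (_ * _); rewrite -!mulrA; congr (_ * (_ * _)); exact: mulrC.
apply: eq_bigr => A _.
under eq_bigr do under eq_bigr do rewrite sum_genprod_assoc.
under [RHS]eq_bigr do rewrite ffunE mulr_sumr mulr_suml.
under [RHS]eq_bigr do under eq_bigr do rewrite mulr_sumr mulr_suml.
rewrite [RHS]exchange_big /=; apply: eq_bigr => B _.
rewrite [RHS]exchange_big /=; apply: eq_bigr => E _.
by rewrite mulr_sumr; apply: eq_bigr => F _; rewrite !mulrA.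
Qed.

Lemma smulDl (x y z : S0 k n r) : smul (x + y) z = smul x z + smul y z.
Proof.
apply/ffunP => C; rewrite !ffunE -big_split; apply: eq_bigr => A _.
by rewrite -big_split; apply: eq_bigr => B _; rewrite ffunE !mulrDl.
Qed.

Lemma smulZl c (x z : S0 k n r) : smul (sscale c x) z = sscale c (smul x z).
Proof.
apply/ffunP => C; rewrite !ffunE mulr_sumr; apply: eq_bigr => A _.
by rewrite mulr_sumr; apply: eq_bigr => B _; rewrite ffunE !mulrA.
Qed.

Lemma smul_ebas (A B C : T) : genprod A B C -> smul (ebas k A) (ebas k B) = ebas k C.
Proof.
move=> gABC; apply/ffunP => D; rewrite !ffunE (bigD1 A) //=.
rewrite [X in _ + X]big1 ?addr0; last first.
  by move=> A' neA; apply: big1 => B' _; rewrite ffunE (negbTE neA) !mul0r.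
rewrite (bigD1 B) //= [X in _ + X]big1 ?addr0; last first.
  by move=> B' neB; rewrite [ebas k B B']ffunE (negbTE neB) mulr0 mul0r.
rewrite !ffunE !eqxx !mul1r.
suff -> : genprod A B D = (D == C) by [].
by apply/idP/eqP => [gABD|->//]; apply: genprod_uniq gABD gABC.
Qed.

End ZeroSchurAlgebra.

Lemma psums0 p : 0 \in psums p.
Proof. by apply/mapP; exists 0; rewrite ?take0 // mem_iota. Qed.

Lemma psums_sumn p : sumn p \in psums p.
Proof.
by apply/mapP; exists (size p); rewrite ?take_size // mem_iota add0n ltnS leqnn.
Qed.

Lemma leq_sumn_take i s : sumn (take i s) <= sumn s.
Proof. by rewrite -{2}(cat_take_drop i s) sumn_cat leq_addr. Qed.

Lemma psums_leq p b : b \in psums p -> b <= sumn p.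
Proof. by case/mapP => i _ ->; apply: leq_sumn_take. Qed.

Lemma sumn_take_map_sumn (ss : seq (seq nat)) i :
  sumn (take i (map sumn ss)) = sumn (take (sumn (take i (map size ss))) (flatten ss)).
Proof.
elim: ss i => [|s ss IH] [|i] //=; first by rewrite take0.
by rewrite take_cat ltnNge leq_addr /= addKn sumn_cat -IH.
Qed.

Lemma refines_psums m p : refines m p -> {subset psums m <= psums p}.
Proof.
case=> ss [<- <-] b /mapP [i _ ->]; apply/mapP.
exists (sumn (take i (map size ss))); last exact: sumn_take_map_sumn.
by rewrite mem_iota add0n ltnS size_flatten leq_sumn_take.
Qed.

Lemma blk_start_spec p i : let s := blk_start p i in
  [/\ s \in psums p, s <= i & forall b, b \in psums p -> b <= i -> b <= s].
Proof.
have [s /andP [ps le_si] def_s] := bigmax_seq_attained (P := fun b => b <= i) id (psums0 p) (leq0n i).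
rewrite /blk_start def_s; split=> // b pb le_bi.
by rewrite -def_s; apply: (leq_bigmax_seq (F := id)).
Qed.

Lemma blk_end_spec n p i : sumn p = n -> i < n -> let e := blk_end n p i in
  [/\ e \in psums p, i < e, e <= n & forall b, b \in psums p -> i < b -> e <= b].
Proof.
move=> sum_p lt_in /=; rewrite /blk_end; split; last 2 first.
- exact: bigmin_seq_leq_idx.
- by move=> b; apply: bigmin_seq_leq.
all: have [->|[e /andP [pe lt_ie] ->]] := big_selective_seq n (psums p) (fun b => i < b) id minn_sel.
all: by rewrite // -sum_p psums_sumn.
Qed.

Section OpenOrbitCumulative.
Variables (n : nat) (lam : 'I_n -> nat).
Local Notation L := (cumc lam).

(* For [B = psums p] this is [cumN] of the matrix of [o_{lam,p}]: within each
   block of [p] the two flags are in general position (cf. [olp_cum_block]). *)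
Definition olp_cum (B : seq nat) a c :=
  \max_(b <- B) (minn (L a) (L b) + minn (L c) (L b) - L b).

Lemma olp_cum_max_gap B a c : 0 \in B ->
  max_gap B (fun b => minn (L a) (L b) + minn (L c) (L b)) L (olp_cum B a c).
Proof. by move=> B0; apply: max_gap_bigmax; exists 0 => //; rewrite cumc0; lia. Qed.

Lemma olp_cum_sep B a c b0 : 0 \in B -> b0 \in B -> a <= b0 <= c ->
  olp_cum B a c = L a.
Proof.
move=> B0 Bb0 /andP [le_ab le_bc].
apply: (max_gap_uniq (olp_cum_max_gap a c B0)); split=> [b _|]; first lia.
by exists b0 => //; have := leq_cumc lam le_ab; have := leq_cumc lam le_bc; lia.
Qed.

Lemma olp_cumC B a c : olp_cum B a c = olp_cum B c a.
Proof. by apply: eq_bigr => b _; rewrite addnC. Qed.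

Lemma olp_cum_block B a c s e : 0 \in B -> s \in B -> e \in B ->
  s <= a <= e -> s <= c <= e -> (forall b, b \in B -> b <= s \/ e <= b) ->
  olp_cum B a c = L s + ((L a - L s + (L c - L s)) - (L e - L s)).
Proof.
move=> B0 Bs Be /andP [le_sa le_ae] /andP [le_sc le_ce] B_out.
have := leq_cumc lam le_sa; have := leq_cumc lam le_ae.
have := leq_cumc lam le_sc; have := leq_cumc lam le_ce => *.
apply: (max_gap_uniq (olp_cum_max_gap a c B0)); split.
  by move=> b Bb; case: (B_out b Bb) => /(leq_cumc lam); lia.
by case: (leqP (L a + L c) (L s + L e)) => cmp; [exists s | exists e] => //; lia.
Qed.

Lemma olp_entry_cum p (i j : 'I_n) : sumn p = n ->
  let G := olp_cum (psums p) in
  olp_entry lam p i j + (G i.+1 j + G i j.+1) = G i.+1 j.+1 + G i j.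
Proof.
move=> sum_p G; have B0 := psums0 p.
have [Bs le_si s_max] := blk_start_spec p i.
have [Be lt_ie le_en e_min] := blk_end_spec sum_p (ltn_ord i).
have [Bsj le_sjj sj_max] := blk_start_spec p j.
rewrite /olp_entry; set s := blk_start p i in Bs le_si s_max *.
set e := blk_end n p i in Be lt_ie le_en e_min *; set sj := blk_start p j in Bsj le_sjj sj_max *.
have B_out b : b \in psums p -> b <= s \/ e <= b.
  by move=> Bb; case: (leqP b i) => lt_bi; [left; apply: s_max | right; apply: e_min].
have same_block : (s == sj) = (s <= j < e).
  apply/eqP/andP => [s_sj|[le_sj lt_je]].
    by split; rewrite ?s_sj // ltnNge; apply/negP => /(sj_max _ Be); lia.
  by apply/eqP; rewrite eqn_leq sj_max //=; case: (B_out _ Bsj); lia.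
rewrite same_block; case: ifP => [/andP [le_sj lt_je] | /negbT out_j].
  rewrite /G !(@olp_cum_block _ _ _ s e) //; try (apply/andP; lia).
  move: (leq_cumc lam (ltnW (leq_ltn_trans le_sj lt_je))) (leq_cumc lam le_sj).
  move: (leq_cumc lam le_si) (leq_cumc lam (leqnSn i)) (leq_cumc lam (leqnSn j)).
  by move: (leq_cumc lam lt_ie) (leq_cumc lam lt_je); lia.
case: (leqP e j) => [le_ej | lt_je].
  by rewrite /G !(@olp_cum_sep _ _ _ e) //; apply/andP; lia.
have lt_js : j < s by move: out_j; rewrite lt_je andbT -ltnNge.
by rewrite /G !(olp_cumC _ i) !(olp_cumC _ i.+1) !(@olp_cum_sep _ _ _ s) //; try (apply/andP; lia); lia.
Qed.

End OpenOrbitCumulative.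

Section OpenOrbitIdempotents.
Variables (n r : nat) (lam : 'I_n -> nat).
Hypothesis sum_lam : (\sum_(i < n) lam i)%N = r.
Local Notation L := (cumc lam).
Local Notation T := (Theta n r).

Definition has_olp_cum (B : seq nat) (O : T) : Prop :=
  forall i j, i <= n -> j <= n -> cumN O i j = olp_cum lam B i j.

Lemma cumc_lam_n : L n = r.
Proof. by rewrite /cumc sum_ord_ltE. Qed.

Lemma exists_olp_Theta p : sumn p = n -> exists2 O : T,
  forall i j : 'I_n, entry O i j = olp_entry lam p i j & has_olp_cum (psums p) O.
Proof.
move=> sum_p; have B0 := psums0 p.
have Bn : n \in psums p by rewrite -sum_p psums_sumn.
have mdiffE (i j : 'I_n) : olp_entry lam p i j = mdiff (olp_cum lam (psums p)) i j.
  by have := olp_entry_cum lam i j sum_p; rewrite /mdiff; lia.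
have [||||O [eO cO]] := exists_Theta_cumN (n := n) (r := r) (P := olp_cum lam (psums p)).
- by move=> j le_jn; rewrite (@olp_cum_sep _ _ _ _ _ 0) ?cumc0.
- by move=> i le_in; rewrite olp_cumC (@olp_cum_sep _ _ _ _ _ 0) ?cumc0.
- by move=> i j lt_in lt_jn; have := olp_entry_cum lam (Ordinal lt_in) (Ordinal lt_jn) sum_p => /=; lia.
- by rewrite (@olp_cum_sep _ _ _ _ _ n) ?leqnn // cumc_lam_n.
by exists O => // i j; rewrite eO mdiffE.
Qed.

Lemma olp_ebas (k : fieldType) p (O : T) :
  (forall i j : 'I_n, entry O i j = olp_entry lam p i j) -> olp k r lam p = ebas k O.
Proof.
move=> eO; apply/ffunP => C; rewrite !ffunE; congr (GRing.natmul _ (nat_of_bool _)).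
apply/forallP/eqP => [eC|->]; last by move=> i; apply/forallP => j; rewrite eO.
by apply: entry_inj => i j; rewrite eO; apply/eqP/(forallP (eC i)).
Qed.

Lemma olp_Theta_co p (O : T) : sumn p = n -> has_olp_cum (psums p) O -> co O =1 lam.
Proof.
move=> sum_p cO; apply: cumc_inj => a le_an.
have Bn : n \in psums p by rewrite -sum_p psums_sumn.
by rewrite -cumNnl cO // olp_cumC (@olp_cum_sep _ _ _ _ _ n) ?psums0 ?le_an ?leqnn.
Qed.

Lemma olp_Theta_ro p (O : T) : sumn p = n -> has_olp_cum (psums p) O -> ro O =1 lam.
Proof.
move=> sum_p cO; apply: cumc_inj => a le_an.
have Bn : n \in psums p by rewrite -sum_p psums_sumn.
by rewrite -cumNnr cO // (@olp_cum_sep _ _ _ _ _ n) ?psums0 ?le_an ?leqnn.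
Qed.

(* The optimal middle index for the product is the block boundary of [Bm]
   realising [olp_cum Bm i j]; it is also a boundary of the finer [Bp]. *)
Lemma olp_cum_prod (Bm Bp : seq nat) i j : 0 \in Bm -> 0 \in Bp ->
  {subset Bm <= Bp} -> {in Bm, forall b, b <= n} ->
  max_gap (iota 0 n.+1) (fun k => olp_cum lam Bm i k + olp_cum lam Bp k j) L
    (olp_cum lam Bm i j).
Proof.
move=> Bm0 Bp0 sub_mp le_Bn.
have [Hij [b Bb Eb]] := olp_cum_max_gap lam i j Bm0.
split=> [k _|].
  have [_ [b1 Bb1 E1]] := olp_cum_max_gap lam i k Bm0.
  have [_ [c Bc E2]] := olp_cum_max_gap lam k j Bp0.
  by have := Hij _ Bb1; lia.
exists b; first by rewrite mem_iota add0n ltnS le_Bn.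
have [H1 [b1 Bb1 E1]] := olp_cum_max_gap lam i b Bm0.
have [H2 [c Bc E2]] := olp_cum_max_gap lam b j Bp0.
by have := H1 _ Bb; have := H2 _ (sub_mp _ Bb); have := Hij _ Bb1; lia.
Qed.

Lemma genprod_olp m p (Om Op : T) : sumn m = n -> sumn p = n ->
  {subset psums m <= psums p} ->
  has_olp_cum (psums m) Om -> has_olp_cum (psums p) Op -> genprod Om Op Om.
Proof.
move=> sum_m sum_p sub_mp cOm cOp.
have co_m := olp_Theta_co sum_m cOm; have ro_p := olp_Theta_ro sum_p cOp.
apply: genprod_intro => [t|i j le_in le_jn]; first by rewrite co_m ro_p.
apply: (max_gap_uniq _ (prodN_max_gap Om Op i j)); rewrite cOm //.
have le_Bn : {in psums m, forall b, b <= n} by move=> b /psums_leq; rewrite sum_m.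
apply: max_gap_ext (olp_cum_prod i j (psums0 m) (psums0 p) sub_mp le_Bn).
  by move=> l; rewrite mem_iota add0n ltnS => le_ln; rewrite cOm // cOp.
by move=> a; rewrite (eq_cumc co_m).
Qed.

End OpenOrbitIdempotents.

Unset Implicit Arguments.
Set Strict Implicit.
Import GRing.Theory.
Local Open Scope ring_scope.

Theorem mainTheorem9 (k : fieldType) (n r : nat) (lam : 'I_n -> nat)
    (m p : seq nat) :
  (\sum_(i < n) lam i)%N = r ->
  is_decomp n m -> is_decomp n p -> refines m p ->
  (forall x : S0 k n r, in_lideal (olp k r lam m) x -> in_lideal (olp k r lam p) x) /\
  exists pi : S0 k n r -> S0 k n r,
    [/\ (forall x y, in_lideal (olp k r lam p) x -> in_lideal (olp k r lam p) y ->
           pi (x + y) = pi x + pi y),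
        (forall (c : k) x, in_lideal (olp k r lam p) x -> pi (sscale c x) = sscale c (pi x)),
        (forall s x, in_lideal (olp k r lam p) x -> pi (smul s x) = smul s (pi x)),
        (forall x, in_lideal (olp k r lam p) x -> in_lideal (olp k r lam m) (pi x)) &
        (forall x, in_lideal (olp k r lam m) x -> pi x = x)].
Proof.
move=> sum_lam /andP [_ /eqP sum_m] /andP [_ /eqP sum_p] m_le_p.
have [Om eOm cOm] := exists_olp_Theta sum_lam sum_m.
have [Op eOp cOp] := exists_olp_Theta sum_lam sum_p.
rewrite (olp_ebas k eOm) (olp_ebas k eOp).
have om_op := smul_ebas k (genprod_olp sum_lam sum_m sum_p (refines_psums m_le_p) cOm cOp).
have om_om := smul_ebas k (genprod_olp sum_lam sum_m sum_m (fun b => id) cOm cOm).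
split=> [x [s ->]|]; first by exists (smul s (ebas k Om)); rewrite smul_assoc om_op.
exists (fun x => smul x (ebas k Om)); split=> [x y _ _|c x _|s x _|x _|x [s ->]].
- exact: smulDl.
- exact: smulZl.
- exact: smul_assoc.
- by exists x.
- by rewrite smul_assoc om_om.
Qed.
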